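(* Let $x,y>0$ and $r,s\in\mathbb{R}$, and let $F_{r,s;x,y}(w)=E(r+w,s+w;x,y)$ for $w\in\mathbb{R}$. If $s+r>0$, then the function $w\mapsto w\ln F_{r,s;x,y}(w)$ is convex on $\bigl(-\frac{s+r}{2},0\bigr)$. If $s+r<0$, then $w\mapsto w\ln F_{r,s;x,y}(w)$ is convex on $\bigl(0,-\frac{s+r}{2}\bigr)$.
   Context: For $x,y>0$ and $r,s\in\mathbb{R}$ the extended mean values are defined by $E(r,s;x,y)=\bigl(\frac{r}{s}\cdot\frac{y^s-x^s}{y^r-x^r}\bigr)^{1/(s-r)}$ if $rs(r-s)(x-y)\neq0$; $E(r,0;x,y)=E(0,r;x,y)=\bigl(\frac1r\cdot\frac{y^r-x^r}{\ln y-\ln x}\bigr)^{1/r}$ if $r(x-y)\neq0$; $E(r,r;x,y)=e^{-1/r}\bigl(\frac{x^{x^r}}{y^{y^r}}\bigr)^{1/(x^r-y^r)}$ if $r(x-y)\neq0$; $E(0,0;x,y)=\sqrt{xy}$ if $x\neq y$; $E(r,s;x,x)=x$. *)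

From Stdlib Require Import Reals Lra.
Open Scope R_scope.

Definition E (r s x y : R) : R :=
  if Req_EM_T x y then x
  else if Req_EM_T r 0 then
         (if Req_EM_T s 0 then sqrt (x * y)
          else Rpower ((1 / s) * (Rpower y s - Rpower x s) / (ln y - ln x)) (1 / s))
  else if Req_EM_T s 0 then
         Rpower ((1 / r) * (Rpower y r - Rpower x r) / (ln y - ln x)) (1 / r)
  else if Req_EM_T r s then
         exp (- (1 / r)) *
         Rpower (Rpower x (Rpower x r) / Rpower y (Rpower y r))
                (1 / (Rpower x r - Rpower y r))
  else Rpower ((r / s) * (Rpower y s - Rpower x s) / (Rpower y r - Rpower x r))
              (1 / (s - r)).

Definition F (r s x y w : R) : R := E (r + w) (s + w) x y.

Definition convex_on (f : R -> R) (a b : R) : Prop :=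
  forall u v t, a < u < b -> a < v < b -> 0 <= t <= 1 ->
    f (t * u + (1 - t) * v) <= t * f u + (1 - t) * f v.

(* Put m = (ln x + ln y)/2, c = (ln y - ln x)/2 and K(u) = ln (sinh u / u),
   K(0) = 0.  The factorization y^t - x^t = 2ct e^{mt} sinh(ct)/(ct) turns
   every branch of the definition of E into one formula: for x <> y,
       ln E(p,q;x,y) = m + [p,q]k,     k(u) = K(cu),
   where [p,q]k is the divided difference (k q - k p)/(q - p), equal to k'(p)
   on the diagonal.  So w ln F(w) = m w + w [r+w, s+w]k, and it suffices to
   show that g(w) = w [r+w, s+w]k is convex.

   This is proved for any k such that k1 = k' is continuous, k1' = k2 >= 0
   away from 0 and k2 is nonincreasing in |u|: then g' is nondecreasing on
   (-(s+r)/2, 0) when s + r > 0, and the case s + r < 0 follows by the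
   reflection w |-> -w when k is even.  The kernel K has these properties,
   K2 = 1/u^2 - 1/sinh^2 u being nonincreasing on (0,oo) because
   u^3 cosh u <= sinh^3 u. *)

From Stdlib Require Import Reals Lra Psatz.
Open Scope R_scope.

Lemma continuity_of_derivative (f : R -> R) (x l : R) :
  derivable_pt_lim f x l -> continuity_pt f x.
Proof. intro Hd. apply derivable_continuous_pt. exists l. exact Hd. Qed.

Lemma derivable_pt_lim_shift (f : R -> R) (c x l : R) :
  derivable_pt_lim f (c + x) l -> derivable_pt_lim (fun w => f (c + w)) x l.
Proof.
  intro Hd. replace l with (l * (0 + 1)) by ring.
  apply (derivable_pt_lim_comp (fun w => c + w) f); [| exact Hd].
  apply derivable_pt_lim_plus; [apply derivable_pt_lim_const | apply derivable_pt_lim_id].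
Qed.

Lemma derivable_pt_lim_scale (f : R -> R) (c x l : R) :
  derivable_pt_lim f (c * x) l -> derivable_pt_lim (fun u => f (c * u)) x (c * l).
Proof.
  intro Hd. replace (c * l) with (l * (0 * x + c * 1)) by ring.
  apply (derivable_pt_lim_comp (fun u => c * u) f); [| exact Hd].
  apply derivable_pt_lim_mult; [apply derivable_pt_lim_const | apply derivable_pt_lim_id].
Qed.

Lemma continuity_pt_shift (f : R -> R) (c x : R) :
  continuity_pt f (c + x) -> continuity_pt (fun w => f (c + w)) x.
Proof.
  intro Hf. apply (continuity_pt_comp (fun w => c + w) f); [| exact Hf].
  apply (continuity_of_derivative _ _ 1). apply (derivable_pt_lim_shift (fun w => w)).
  apply derivable_pt_lim_id.
Qed.

Lemma continuity_pt_scale (f : R -> R) (c x : R) :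
  continuity_pt f (c * x) -> continuity_pt (fun u => f (c * u)) x.
Proof.
  intro Hf. apply (continuity_pt_comp (fun u => c * u) f); [| exact Hf].
  apply (continuity_of_derivative _ _ (c * 1)). apply (derivable_pt_lim_scale (fun u => u)).
  apply derivable_pt_lim_id.
Qed.

Lemma nonzero_near (u : R) :
  u <> 0 ->
  u - Rabs u < u < u + Rabs u /\ (forall z, u - Rabs u < z < u + Rabs u -> z <> 0).
Proof.
  intro Hu. destruct (Rcase_abs u) as [Hneg | Hpos].
  - rewrite Rabs_left by exact Hneg. split; [lra | intros z Hz; lra].
  - rewrite Rabs_pos_eq by lra. split; [lra | intros z Hz; lra].
Qed.

Lemma le_of_deriv_nonneg (f f' : R -> R) (u v : R) :
  u <= v ->
  (forall z, u <= z <= v -> continuity_pt f z) ->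
  (forall z, u < z < v -> derivable_pt_lim f z (f' z)) ->
  (forall z, u < z < v -> 0 <= f' z) ->
  f u <= f v.
Proof.
  intros Huv Hcont Hder Hpos.
  destruct (Req_dec u v) as [<- | Hne]; [lra |].
  pose (pr_f := fun z (Hz : u < z < v) =>
                  exist (fun l => derivable_pt_lim f z l) (f' z) (Hder z Hz)).
  pose (pr_id := fun z (_ : u < z < v) => derivable_pt_id z).
  destruct (MVT f id u v pr_f pr_id ltac:(lra) Hcont
              (fun z _ => derivable_continuous_pt _ _ (derivable_pt_id z)))
    as [z [Hz Heq]].
  unfold pr_f, pr_id in Heq. rewrite derive_pt_id in Heq. simpl in Heq. unfold id in Heq.
  specialize (Hpos z Hz). nra.
Qed.

Lemma le_of_deriv_nonneg_closed (f f' : R -> R) (u v : R) :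
  u <= v ->
  (forall z, u <= z <= v -> derivable_pt_lim f z (f' z)) ->
  (forall z, u < z < v -> 0 <= f' z) ->
  f u <= f v.
Proof.
  intros Huv Hder Hpos. apply (le_of_deriv_nonneg f f'); auto.
  - intros z Hz. exact (continuity_of_derivative _ _ _ (Hder z Hz)).
  - intros z Hz. apply Hder. lra.
Qed.

Lemma le_of_deriv_nonneg_except (f f' : R -> R) (e u v : R) :
  u <= v ->
  (forall z, u <= z <= v -> continuity_pt f z) ->
  (forall z, u < z < v -> z <> e -> derivable_pt_lim f z (f' z)) ->
  (forall z, u < z < v -> z <> e -> 0 <= f' z) ->
  f u <= f v.
Proof.
  intros Huv Hcont Hder Hpos.
  assert (piece : forall p q, u <= p <= q -> q <= v -> ~ (p < e < q) -> f p <= f q).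
  { intros p q Hp Hq He. apply (le_of_deriv_nonneg f f'); [lra | | |].
    - intros z Hz. apply Hcont. lra.
    - intros z Hz. apply Hder; lra.
    - intros z Hz. apply Hpos; lra. }
  destruct (Rlt_dec u e); [destruct (Rlt_dec e v) |].
  - apply Rle_trans with (f e); apply piece; lra.
  - apply piece; lra.
  - apply piece; lra.
Qed.

Lemma chord_of_deriv_monotone (f f' : R -> R) (a b u v t : R) :
  (forall z, a < z < b -> derivable_pt_lim f z (f' z)) ->
  (forall z1 z2, a < z1 -> z1 <= z2 -> z2 < b -> f' z1 <= f' z2) ->
  a < u -> u < v -> v < b -> 0 < t < 1 ->
  f (t * u + (1 - t) * v) <= t * f u + (1 - t) * f v.
Proof.
  intros Hder Hmono Hau Huv Hvb Ht.
  set (z := t * u + (1 - t) * v).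
  assert (Hz : u < z < v) by (unfold z; nra).
  destruct (MVT_cor2 f f' u z) as [c1 [E1 Hc1]]; [lra | intros; apply Hder; lra |].
  destruct (MVT_cor2 f f' z v) as [c2 [E2 Hc2]]; [lra | intros; apply Hder; lra |].
  assert (Hslope : f' c1 <= f' c2) by (apply Hmono; lra).
  assert (Hgap : t * f u + (1 - t) * f v - f z = t * (1 - t) * (v - u) * (f' c2 - f' c1)).
  { replace (t * f u + (1 - t) * f v - f z) with ((1 - t) * (f v - f z) - t * (f z - f u))
      by ring.
    rewrite E1, E2. unfold z. ring. }
  assert (0 <= t * (1 - t) * (v - u)) by (apply Rmult_le_pos; nra).
  nra.
Qed.

Lemma convex_of_deriv_monotone (f f' : R -> R) (a b : R) :
  (forall z, a < z < b -> derivable_pt_lim f z (f' z)) ->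
  (forall z1 z2, a < z1 -> z1 <= z2 -> z2 < b -> f' z1 <= f' z2) ->
  convex_on f a b.
Proof.
  intros Hder Hmono u v t Hu Hv Ht.
  destruct (Req_dec t 0) as [-> | Ht0].
  { replace (0 * u + (1 - 0) * v) with v by ring. lra. }
  destruct (Req_dec t 1) as [-> | Ht1].
  { replace (1 * u + (1 - 1) * v) with u by ring. lra. }
  destruct (Rtotal_order u v) as [Huv | [<- | Hvu]].
  - apply (chord_of_deriv_monotone f f' a b); lra || assumption.
  - replace (t * u + (1 - t) * u) with u by ring. lra.
  - replace (t * u + (1 - t) * v) with ((1 - t) * v + (1 - (1 - t)) * u) by ring.
    replace (t * f u + (1 - t) * f v) with ((1 - t) * f v + (1 - (1 - t)) * f u) by ring.
    apply (chord_of_deriv_monotone f f' a b); lra || assumption.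
Qed.

Lemma convex_on_ext (f g : R -> R) (a b : R) :
  (forall w, f w = g w) -> convex_on f a b -> convex_on g a b.
Proof. intros Hfg Hf u v t Hu Hv Ht. rewrite <- !Hfg. apply Hf; assumption. Qed.

Lemma convex_on_add_linear (f : R -> R) (a b m : R) :
  convex_on f a b -> convex_on (fun w => m * w + f w) a b.
Proof. intros Hf u v t Hu Hv Ht. specialize (Hf u v t Hu Hv Ht). nra. Qed.

Lemma convex_on_reflect (f : R -> R) (a b : R) :
  convex_on f a b -> convex_on (fun w => f (- w)) (- b) (- a).
Proof.
  intros Hf u v t Hu Hv Ht.
  replace (- (t * u + (1 - t) * v)) with (t * - u + (1 - t) * - v) by ring.
  apply Hf; lra.
Qed.

Lemma cosh_sqr_sub_sinh_sqr (u : R) : cosh u * cosh u - sinh u * sinh u = 1.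
Proof.
  assert (Hinv : exp u * exp (- u) = 1) by (rewrite <- exp_plus, Rplus_opp_r; apply exp_0).
  unfold cosh, sinh. rewrite <- Hinv. field.
Qed.

Lemma one_le_cosh (u : R) : 1 <= cosh u.
Proof.
  pose proof (cosh_sqr_sub_sinh_sqr u). pose proof (exp_pos u). pose proof (exp_pos (- u)).
  assert (0 < cosh u) by (unfold cosh; lra).
  nra.
Qed.

Lemma sinh_opp (u : R) : sinh (- u) = - sinh u.
Proof. unfold sinh. rewrite Ropp_involutive. field. Qed.

Lemma cosh_opp (u : R) : cosh (- u) = cosh u.
Proof. unfold cosh. rewrite Ropp_involutive. field. Qed.

Lemma le_sinh (u : R) : 0 <= u -> u <= sinh u.
Proof.
  intro Hu.
  assert (H : sinh 0 - 0 <= sinh u - u).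
  { apply (le_of_deriv_nonneg_closed (fun z => sinh z - z) (fun z => cosh z - 1)); [lra | |].
    - intros z _. apply derivable_pt_lim_minus;
        [apply derivable_pt_lim_sinh | apply derivable_pt_lim_id].
    - intros z _. pose proof (one_le_cosh z). lra. }
  rewrite sinh_0 in H. lra.
Qed.

Lemma sinh_le_mul_cosh (u : R) : 0 <= u -> sinh u <= u * cosh u.
Proof.
  intro Hu.
  assert (H : 0 * cosh 0 - sinh 0 <= u * cosh u - sinh u).
  { apply (le_of_deriv_nonneg_closed (fun z => z * cosh z - sinh z) (fun z => z * sinh z));
      [lra | |].
    - intros z _. replace (z * sinh z) with (1 * cosh z + z * sinh z - cosh z) by ring.
      apply derivable_pt_lim_minus; [apply derivable_pt_lim_mult |];
        auto using derivable_pt_lim_id, derivable_pt_lim_cosh, derivable_pt_lim_sinh.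
    - intros z Hz. pose proof (le_sinh z). nra. }
  rewrite sinh_0 in H. lra.
Qed.

Lemma cosh_sub_1_le_pos (u : R) : 0 <= u -> cosh u - 1 <= u * sinh u.
Proof.
  intro Hu.
  assert (H : 0 * sinh 0 - cosh 0 <= u * sinh u - cosh u).
  { apply (le_of_deriv_nonneg_closed (fun z => z * sinh z - cosh z) (fun z => z * cosh z));
      [lra | |].
    - intros z _. replace (z * cosh z) with (1 * sinh z + z * cosh z - sinh z) by ring.
      apply derivable_pt_lim_minus; [apply derivable_pt_lim_mult |];
        auto using derivable_pt_lim_id, derivable_pt_lim_cosh, derivable_pt_lim_sinh.
    - intros z Hz. pose proof (one_le_cosh z). nra. }
  rewrite sinh_0, cosh_0 in H. lra.
Qed.

(* Both sides are even, so the last bound holds for every u. *)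
Lemma cosh_sub_1_le (u : R) : cosh u - 1 <= u * sinh u.
Proof.
  destruct (Rle_dec 0 u) as [Hu | Hu]; [now apply cosh_sub_1_le_pos |].
  pose proof (cosh_sub_1_le_pos (- u)) as H. rewrite cosh_opp, sinh_opp in H. nra.
Qed.

(* The cube root of cosh, used to prove u^3 cosh u <= sinh^3 u. *)
Definition cbrt_cosh (u : R) : R := Rpower (cosh u) (1 / 3).

Lemma cbrt_cosh_pos (u : R) : 0 < cbrt_cosh u.
Proof. apply exp_pos. Qed.

Lemma cbrt_cosh_cube (u : R) : cbrt_cosh u * cbrt_cosh u * cbrt_cosh u = cosh u.
Proof.
  unfold cbrt_cosh. rewrite <- !Rpower_plus.
  replace (1 / 3 + 1 / 3 + 1 / 3) with 1 by field.
  apply Rpower_1. pose proof (one_le_cosh u). lra.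
Qed.

Lemma cbrt_cosh_deriv (u : R) :
  derivable_pt_lim cbrt_cosh u (cbrt_cosh u * sinh u / (3 * cosh u)).
Proof.
  assert (Hc : 0 < cosh u) by (pose proof (one_le_cosh u); lra).
  assert (Hpow : cbrt_cosh u = Rpower (cosh u) (1 / 3 - 1) * cosh u).
  { unfold cbrt_cosh. rewrite <- (Rpower_1 (cosh u)) at 3 by exact Hc.
    rewrite <- Rpower_plus. f_equal. ring. }
  replace (cbrt_cosh u * sinh u / (3 * cosh u))
    with (1 / 3 * Rpower (cosh u) (1 / 3 - 1) * sinh u) by (rewrite Hpow; field; lra).
  apply (derivable_pt_lim_comp cosh (fun c => Rpower c (1 / 3))).
  - apply derivable_pt_lim_cosh.
  - apply derivable_pt_lim_power. exact Hc.
Qed.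

(* u cbrt(cosh u) <= sinh u: the derivative of sinh / cbrt(cosh) is
   (2 T^6 + 1) / (3 T^4) >= 1, where T = cbrt(cosh u). *)
Lemma mul_cbrt_cosh_le_sinh (u : R) : 0 <= u -> u * cbrt_cosh u <= sinh u.
Proof.
  intro Hu.
  assert (H : sinh 0 / cbrt_cosh 0 - 0 <= sinh u / cbrt_cosh u - u).
  { apply (le_of_deriv_nonneg_closed (fun z => sinh z / cbrt_cosh z - z)
      (fun z => (2 * cosh z * cosh z + 1) / (3 * cosh z * cbrt_cosh z) - 1)); [lra | |].
    - intros z _.
      pose proof (cbrt_cosh_pos z). pose proof (one_le_cosh z).
      pose proof (cosh_sqr_sub_sinh_sqr z).
      replace ((2 * cosh z * cosh z + 1) / (3 * cosh z * cbrt_cosh z))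
        with ((cosh z * cbrt_cosh z - cbrt_cosh z * sinh z / (3 * cosh z) * sinh z)
              / Rsqr (cbrt_cosh z)).
      2: { replace (2 * cosh z * cosh z + 1) with (3 * cosh z * cosh z - sinh z * sinh z) by lra.
           unfold Rsqr. field. lra. }
      apply derivable_pt_lim_minus; [apply derivable_pt_lim_div |];
        auto using derivable_pt_lim_sinh, cbrt_cosh_deriv, derivable_pt_lim_id.
      lra.
    - intros z _. pose proof (cbrt_cosh_pos z) as HT. pose proof (cbrt_cosh_cube z) as Hcube.
      set (T := cbrt_cosh z) in *. rewrite <- Hcube.
      assert (HT4 : 0 < 3 * (T * T * T) * T) by (repeat apply Rmult_lt_0_compat; lra).
      replace ((2 * (T * T * T) * (T * T * T) + 1) / (3 * (T * T * T) * T) - 1)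
        with ((T * T - 1) * (T * T - 1) * (2 * T * T + 1) / (3 * (T * T * T) * T))
        by (field; lra).
      apply Rmult_le_pos; [| left; apply Rinv_0_lt_compat; exact HT4].
      apply Rmult_le_pos; [apply Rle_0_sqr | nra]. }
  rewrite sinh_0, Rdiv_0_l in H.
  pose proof (cbrt_cosh_pos u).
  apply Rmult_le_reg_r with (/ cbrt_cosh u); [now apply Rinv_0_lt_compat |].
  rewrite Rmult_assoc, Rinv_r, Rmult_1_r by lra. unfold Rdiv in H. lra.
Qed.

Lemma cube_mul_cosh_le_sinh_cube (u : R) :
  0 <= u -> u * u * u * cosh u <= sinh u * sinh u * sinh u.
Proof.
  intro Hu. pose proof (mul_cbrt_cosh_le_sinh u Hu). pose proof (cbrt_cosh_pos u).
  rewrite <- cbrt_cosh_cube.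
  replace (u * u * u * (cbrt_cosh u * cbrt_cosh u * cbrt_cosh u))
    with ((u * cbrt_cosh u) * (u * cbrt_cosh u) * (u * cbrt_cosh u)) by ring.
  assert (0 <= u * cbrt_cosh u) by nra.
  apply Rmult_le_compat; try nra.
Qed.

Definition sinhc (u : R) : R := if Req_EM_T u 0 then 1 else sinh u / u.

(* The kernel K = ln sinhc, its derivative K1 = coth u - 1/u (0 at 0), and
   K2 = 1/u^2 - 1/sinh^2 u, the derivative of K1 away from 0. *)
Definition K (u : R) : R := ln (sinhc u).
Definition K1 (u : R) : R := if Req_EM_T u 0 then 0 else cosh u / sinh u - 1 / u.
Definition K2 (u : R) : R := 1 / (u * u) - 1 / (sinh u * sinh u).

Lemma sinh_pos (u : R) : 0 < u -> 0 < sinh u.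
Proof. intro Hu. pose proof (le_sinh u). lra. Qed.

Lemma sinh_neq_0 (u : R) : u <> 0 -> sinh u <> 0.
Proof.
  intro Hu. destruct (Rlt_dec 0 u) as [Hpos | Hneg].
  - pose proof (sinh_pos u Hpos). lra.
  - pose proof (sinh_pos (- u) ltac:(lra)) as H. rewrite sinh_opp in H. lra.
Qed.

Lemma sinhc_opp (u : R) : sinhc (- u) = sinhc u.
Proof.
  unfold sinhc. destruct (Req_EM_T (- u) 0), (Req_EM_T u 0); try lra.
  rewrite sinh_opp. field. assumption.
Qed.

Lemma sinhc_bounds (u : R) : 1 <= sinhc u <= cosh u.
Proof.
  assert (Hpos : forall v, 0 < v -> 1 <= sinhc v <= cosh v).
  { intros v Hv. unfold sinhc. destruct (Req_EM_T v 0); [lra |].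
    pose proof (le_sinh v). pose proof (sinh_le_mul_cosh v).
    unfold Rdiv. split;
      [replace 1 with (v * / v) by (field; lra)
      | replace (cosh v) with (v * cosh v * / v) by (field; lra)];
      apply Rmult_le_compat_r; try (left; apply Rinv_0_lt_compat); lra. }
  destruct (Rtotal_order u 0) as [Hneg | [-> | Hgt]].
  - rewrite <- sinhc_opp, <- cosh_opp. apply Hpos. lra.
  - unfold sinhc. destruct (Req_EM_T 0 0); [| lra]. pose proof (one_le_cosh 0). lra.
  - apply Hpos. exact Hgt.
Qed.

Lemma K_opp (u : R) : K (- u) = K u.
Proof. unfold K. rewrite sinhc_opp. reflexivity. Qed.

Lemma K_0 : K 0 = 0.
Proof. unfold K, sinhc. destruct (Req_EM_T 0 0); [apply ln_1 | lra]. Qed.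

(* 0 <= K u <= cosh u - 1 <= u sinh u, using ln z <= z - 1. *)
Lemma K_bounds (u : R) : 0 <= K u <= u * sinh u.
Proof.
  destruct (sinhc_bounds u) as [Hlo Hhi]. unfold K. split.
  - rewrite <- ln_1. destruct (Req_dec (sinhc u) 1) as [-> | Hne]; [lra |].
    left. apply ln_increasing; lra.
  - pose proof (exp_ineq1_le (ln (sinhc u))) as Hln. rewrite exp_ln in Hln by lra.
    pose proof (cosh_sub_1_le u). lra.
Qed.

(* K is flat at the origin: |K h / h| <= |sinh h|, which tends to 0. *)
Lemma K_deriv_0 : derivable_pt_lim K 0 0.
Proof.
  intros eps Heps.
  destruct (continuity_of_derivative sinh 0 _ (derivable_pt_lim_sinh 0) eps Heps)
    as [d [Hd Hsinh]].
  exists (mkposreal d Hd). intros h Hh Hhd. simpl in Hhd.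
  assert (Hsmall : Rabs (sinh h) < eps).
  { specialize (Hsinh h). simpl in Hsinh. unfold R_dist in Hsinh.
    rewrite sinh_0, !Rminus_0_r in Hsinh. apply Hsinh.
    split; [split; [exact I | auto] | exact Hhd]. }
  rewrite Rplus_0_l, K_0, !Rminus_0_r.
  destruct (K_bounds h) as [Hlo Hhi].
  assert (Habs : 0 < Rabs h) by (apply Rabs_pos_lt; exact Hh).
  apply Rle_lt_trans with (Rabs (sinh h)); [| exact Hsmall].
  unfold Rdiv. rewrite Rabs_mult, Rabs_inv, (Rabs_pos_eq (K h)) by exact Hlo.
  apply Rmult_le_reg_r with (Rabs h); [exact Habs |].
  rewrite Rmult_assoc, Rinv_l, Rmult_1_r, <- Rabs_mult by lra.
  apply Rle_trans with (h * sinh h); [exact Hhi |].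
  rewrite Rmult_comm. apply Rle_abs.
Qed.

Lemma K_deriv (u : R) : derivable_pt_lim K u (K1 u).
Proof.
  unfold K1. destruct (Req_EM_T u 0) as [-> | Hu]; [exact K_deriv_0 |].
  destruct (nonzero_near u Hu) as [Hint Hnz].
  apply (derivable_pt_lim_locally_ext (fun z => ln (sinh z / z)) K u _ _ _ Hint).
  - intros z Hz. unfold K, sinhc.
    destruct (Req_EM_T z 0) as [Hz0 | _]; [exfalso; exact (Hnz z Hz Hz0) | reflexivity].
  - assert (Hq : 1 <= sinh u / u).
    { destruct (sinhc_bounds u) as [Hb _]. unfold sinhc in Hb.
      destruct (Req_EM_T u 0); [contradiction | exact Hb]. }
    pose proof (sinh_neq_0 u Hu).
    replace (cosh u / sinh u - 1 / u)
      with (/ (sinh u / u) * ((cosh u * u - 1 * sinh u) / Rsqr u))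
      by (unfold Rsqr; field; auto).
    apply (derivable_pt_lim_comp (fun z => sinh z / z) ln).
    + apply derivable_pt_lim_div; auto using derivable_pt_lim_sinh, derivable_pt_lim_id.
    + apply derivable_pt_lim_ln. lra.
Qed.

Lemma K1_deriv (u : R) : u <> 0 -> derivable_pt_lim K1 u (K2 u).
Proof.
  intro Hu. destruct (nonzero_near u Hu) as [Hint Hnz].
  apply (derivable_pt_lim_locally_ext (fun z => cosh z / sinh z - 1 / z) K1 u _ _ _ Hint).
  - intros z Hz. unfold K1.
    destruct (Req_EM_T z 0) as [Hz0 | _]; [exfalso; exact (Hnz z Hz Hz0) | reflexivity].
  - pose proof (sinh_neq_0 u Hu). pose proof (cosh_sqr_sub_sinh_sqr u).
    replace (K2 u) with ((sinh u * sinh u - cosh u * cosh u) / Rsqr (sinh u)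
                         - (0 * u - 1 * 1) / Rsqr u).
    2: { replace (sinh u * sinh u - cosh u * cosh u) with (-1) by lra.
         unfold K2, Rsqr. field. auto. }
    apply derivable_pt_lim_minus; apply derivable_pt_lim_div;
      auto using derivable_pt_lim_cosh, derivable_pt_lim_sinh, derivable_pt_lim_id.
    apply derivable_pt_lim_const.
Qed.

Lemma K2_deriv (u : R) :
  u <> 0 ->
  derivable_pt_lim K2 u (2 * (cosh u / (sinh u * sinh u * sinh u) - 1 / (u * u * u))).
Proof.
  intro Hu. pose proof (sinh_neq_0 u Hu).
  replace (2 * (cosh u / (sinh u * sinh u * sinh u) - 1 / (u * u * u)))
    with ((0 * (u * u) - (1 * u + u * 1) * 1) / Rsqr (u * u)
          - (0 * (sinh u * sinh u) - (cosh u * sinh u + sinh u * cosh u) * 1)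
            / Rsqr (sinh u * sinh u)) by (unfold Rsqr; field; auto).
  apply derivable_pt_lim_minus.
  - apply (derivable_pt_lim_div (fun _ => 1) (fun z => z * z));
      [apply derivable_pt_lim_const | | now apply Rmult_integral_contrapositive_currified].
    apply (derivable_pt_lim_mult (fun z => z) (fun z => z)); apply derivable_pt_lim_id.
  - apply (derivable_pt_lim_div (fun _ => 1) (fun z => sinh z * sinh z));
      [apply derivable_pt_lim_const | | now apply Rmult_integral_contrapositive_currified].
    apply (derivable_pt_lim_mult sinh sinh); apply derivable_pt_lim_sinh.
Qed.

Lemma K1_opp (u : R) : K1 (- u) = - K1 u.
Proof.
  unfold K1. destruct (Req_EM_T (- u) 0), (Req_EM_T u 0); try lra.
  rewrite sinh_opp, cosh_opp. field. auto using sinh_neq_0.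
Qed.

Lemma K1_bounds_pos (u : R) : 0 < u -> 0 <= K1 u <= u.
Proof.
  intro Hu. unfold K1. destruct (Req_EM_T u 0); [lra |].
  pose proof (sinh_pos u Hu). pose proof (le_sinh u). pose proof (sinh_le_mul_cosh u).
  pose proof (cosh_sub_1_le u).
  assert (Hden : 0 < u * sinh u) by nra.
  replace (cosh u / sinh u - 1 / u) with ((u * cosh u - sinh u) / (u * sinh u)) by (field; lra).
  unfold Rdiv. split.
  - apply Rmult_le_pos; [lra | left; apply Rinv_0_lt_compat; exact Hden].
  - apply Rmult_le_reg_r with (u * sinh u); [exact Hden |].
    rewrite Rmult_assoc, Rinv_l by lra. nra.
Qed.

Lemma K1_abs_le (u : R) : Rabs (K1 u) <= Rabs u.
Proof.
  destruct (Rtotal_order u 0) as [Hneg | [-> | Hpos]].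
  - rewrite <- (Ropp_involutive u), K1_opp, !Rabs_Ropp.
    destruct (K1_bounds_pos (- u)) as [Hlo Hhi]; [lra |].
    rewrite (Rabs_pos_eq (K1 (- u))), (Rabs_left u); lra.
  - unfold K1. destruct (Req_EM_T 0 0); [| lra]. rewrite Rabs_R0. lra.
  - destruct (K1_bounds_pos u Hpos). rewrite !Rabs_pos_eq; lra.
Qed.

Lemma K1_cont_0 : continuity_pt K1 0.
Proof.
  unfold continuity_pt, continue_in, limit1_in, limit_in. simpl. intros eps Heps.
  exists eps. split; [exact Heps |]. intros z [_ Hz]. unfold R_dist in *.
  replace (K1 0) with 0 by (unfold K1; destruct (Req_EM_T 0 0); lra).
  rewrite Rminus_0_r in *. pose proof (K1_abs_le z). lra.
Qed.

Lemma K2_abs (u : R) : K2 u = K2 (Rabs u).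
Proof.
  unfold K2. destruct (Rcase_abs u) as [Hneg | Hpos].
  - rewrite Rabs_left by exact Hneg. rewrite sinh_opp.
    replace (- u * - u) with (u * u) by ring.
    replace (- sinh u * - sinh u) with (sinh u * sinh u) by ring. reflexivity.
  - rewrite Rabs_pos_eq by lra. reflexivity.
Qed.

(* K2 >= 0 because |sinh u| >= |u|. *)
Lemma K2_nonneg (u : R) : u <> 0 -> 0 <= K2 u.
Proof.
  intro Hu. rewrite K2_abs. pose proof (Rabs_pos_lt u Hu) as Ha.
  set (v := Rabs u) in *. pose proof (le_sinh v). unfold K2.
  assert (1 / (sinh v * sinh v) <= 1 / (v * v)).
  { unfold Rdiv. rewrite !Rmult_1_l. apply Rinv_le_contravar; nra. }
  lra.
Qed.

(* K2 is nonincreasing on (0, oo): its derivative has the sign of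
   u^3 cosh u - sinh^3 u <= 0. *)
Lemma K2_antitone_pos (u v : R) : 0 < u -> u <= v -> K2 v <= K2 u.
Proof.
  intros Hu Huv.
  assert (H : - K2 u <= - K2 v).
  { apply (le_of_deriv_nonneg_closed (fun z => - K2 z)
      (fun z => - (2 * (cosh z / (sinh z * sinh z * sinh z) - 1 / (z * z * z)))));
      [exact Huv | |].
    - intros z Hz. apply derivable_pt_lim_opp. apply K2_deriv. lra.
    - intros z Hz. pose proof (cube_mul_cosh_le_sinh_cube z ltac:(lra)).
      pose proof (sinh_pos z ltac:(lra)).
      assert (cube_pos : forall a, 0 < a -> 0 < a * a * a)
        by (intros; repeat apply Rmult_lt_0_compat; assumption).
      assert (Hden : 0 < sinh z * sinh z * sinh z * (z * z * z))
        by (apply Rmult_lt_0_compat; apply cube_pos; lra).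
      replace (cosh z / (sinh z * sinh z * sinh z) - 1 / (z * z * z))
        with ((z * z * z * cosh z - sinh z * sinh z * sinh z)
              * / (sinh z * sinh z * sinh z * (z * z * z))) by (field; lra).
      pose proof (Rinv_0_lt_compat _ Hden). nra. }
  lra.
Qed.

Lemma K2_antitone_abs (p q : R) : p <> 0 -> p * p <= q * q -> K2 q <= K2 p.
Proof.
  intros Hp Hpq. rewrite (K2_abs p), (K2_abs q).
  apply K2_antitone_pos; [now apply Rabs_pos_lt |].
  apply Rsqr_le_abs_0. exact Hpq.
Qed.

(* Divided difference [p,q]k of k, read as k1 p on the diagonal (k1 being
   the derivative of k). *)
Definition divdiff (k k1 : R -> R) (p q : R) : R :=
  if Req_EM_T p q then k1 p else (k q - k p) / (q - p).

Lemma divdiff_sym (k k1 : R -> R) (p q : R) : divdiff k k1 p q = divdiff k k1 q p.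
Proof.
  unfold divdiff. destruct (Req_EM_T p q) as [Hpq | Hpq], (Req_EM_T q p); try lra.
  - rewrite Hpq. reflexivity.
  - field. lra.
Qed.

Lemma divdiff_opp (k k1 : R -> R) (p q : R) :
  (forall u, k (- u) = k u) -> (forall u, k1 (- u) = - k1 u) ->
  divdiff k k1 (- p) (- q) = - divdiff k k1 p q.
Proof.
  intros Hk Hk1. unfold divdiff.
  destruct (Req_EM_T (- p) (- q)), (Req_EM_T p q); try lra.
  - apply Hk1.
  - rewrite !Hk. field. lra.
Qed.

Section DivdiffConvexity.

Variables k k1 k2 : R -> R.
Hypothesis k_deriv : forall u, derivable_pt_lim k u (k1 u).
Hypothesis k1_deriv : forall u, u <> 0 -> derivable_pt_lim k1 u (k2 u).
Hypothesis k1_cont_0 : continuity_pt k1 0.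
Hypothesis k2_nonneg : forall u, u <> 0 -> 0 <= k2 u.
Hypothesis k2_antitone_abs : forall p q, p <> 0 -> p * p <= q * q -> k2 q <= k2 p.

Lemma k1_cont (u : R) : continuity_pt k1 u.
Proof.
  destruct (Req_dec u 0) as [-> | Hu]; [exact k1_cont_0 |].
  exact (continuity_of_derivative _ _ _ (k1_deriv u Hu)).
Qed.

Lemma k1_mono (u v : R) : u <= v -> k1 u <= k1 v.
Proof.
  intro Huv. apply (le_of_deriv_nonneg_except k1 k2 0); [exact Huv | | |].
  - intros z _. apply k1_cont.
  - intros z _ Hz. exact (k1_deriv z Hz).
  - intros z _ Hz. exact (k2_nonneg z Hz).
Qed.

(* Diagonal case r = s: the derivative k1(r+w) + w k2(r+w) of w k1(r+w) is
   nondecreasing on (-r, 0), as k1 grows while 0 <= k2(r+w) decreases. *)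
Lemma convex_diag (r : R) : 0 < r -> convex_on (fun w => w * k1 (r + w)) (- r) 0.
Proof.
  intro Hr.
  apply convex_of_deriv_monotone with (f' := fun w => k1 (r + w) + w * k2 (r + w)).
  - intros w Hw. cbv beta. replace (k1 (r + w) + w * k2 (r + w))
      with (1 * k1 (r + w) + w * k2 (r + w)) by ring.
    apply (derivable_pt_lim_mult (fun w => w) (fun w => k1 (r + w)));
      [apply derivable_pt_lim_id |].
    apply (derivable_pt_lim_shift k1). apply k1_deriv. lra.
  - intros w1 w2 H1 H12 H2.
    assert (k1 (r + w1) <= k1 (r + w2)) by (apply k1_mono; lra).
    assert (k2 (r + w2) <= k2 (r + w1)) by (apply k2_antitone_abs; [lra | nra]).
    assert (0 <= k2 (r + w2)) by (apply k2_nonneg; lra).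
    nra.
Qed.

Section OffDiagonal.

Variables r s : R.
Hypothesis r_lt_s : r < s.

Let A (w : R) : R := / (s - r) * (k (s + w) - k (r + w)).
Let D (w : R) : R := / (s - r) * (k1 (s + w) - k1 (r + w)).

Lemma secant_deriv (w : R) : derivable_pt_lim A w (D w).
Proof.
  apply (derivable_pt_lim_scal (fun w => k (s + w) - k (r + w))).
  apply derivable_pt_lim_minus; apply derivable_pt_lim_shift; apply k_deriv.
Qed.

Lemma secant_deriv_nonneg (w : R) : 0 <= D w.
Proof.
  apply Rmult_le_pos; [left; apply Rinv_0_lt_compat; lra |].
  assert (k1 (r + w) <= k1 (s + w)) by (apply k1_mono; lra). lra.
Qed.

Lemma secant_mono (w1 w2 : R) : w1 <= w2 -> A w1 <= A w2.
Proof.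
  intro H12. apply (le_of_deriv_nonneg_closed A D); [exact H12 | |].
  - intros w _. apply secant_deriv.
  - intros w _. apply secant_deriv_nonneg.
Qed.

(* For w > -(s+r)/2 we have |r+w| <= |s+w|, hence k2(s+w) <= k2(r+w):
   D is nonincreasing there (k1 is only known continuous at r+w = 0). *)
Lemma secant_deriv_antitone (w1 w2 : R) :
  - ((s + r) / 2) < w1 -> w1 <= w2 -> D w2 <= D w1.
Proof.
  intros H1 H12.
  assert (H : - D w1 <= - D w2).
  { apply (le_of_deriv_nonneg_except (fun w => - D w)
             (fun w => - (/ (s - r) * (k2 (s + w) - k2 (r + w)))) (- r));
      [exact H12 | | |].
    - intros w _. apply continuity_pt_opp, continuity_pt_scal, continuity_pt_minus;
        apply continuity_pt_shift; apply k1_cont.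
    - intros w Hw Hwr. apply derivable_pt_lim_opp, derivable_pt_lim_scal,
        derivable_pt_lim_minus; apply derivable_pt_lim_shift; apply k1_deriv; lra.
    - intros w Hw Hwr.
      assert (k2 (s + w) <= k2 (r + w)) by (apply k2_antitone_abs; [lra | nra]).
      assert (0 < / (s - r)) by (apply Rinv_0_lt_compat; lra).
      nra. }
  lra.
Qed.

Lemma convex_offdiag : convex_on (fun w => w * A w) (- ((s + r) / 2)) 0.
Proof.
  apply convex_of_deriv_monotone with (f' := fun w => A w + w * D w).
  - intros w _. cbv beta. replace (A w + w * D w) with (1 * A w + w * D w) by ring.
    apply (derivable_pt_lim_mult (fun w => w) A); [apply derivable_pt_lim_id | apply secant_deriv].
  - intros w1 w2 H1 H12 H2.
    pose proof (secant_mono w1 w2 H12). pose proof (secant_deriv_antitone w1 w2 H1 H12).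
    pose proof (secant_deriv_nonneg w2).
    nra.
Qed.

End OffDiagonal.

Theorem divdiff_weighted_convex (r s : R) :
  0 < s + r ->
  convex_on (fun w => w * divdiff k k1 (r + w) (s + w)) (- ((s + r) / 2)) 0.
Proof.
  intro Hsum. destruct (Rtotal_order r s) as [Hrs | [<- | Hsr]].
  - apply convex_on_ext with (2 := convex_offdiag r s Hrs). intro w.
    unfold divdiff. destruct (Req_EM_T (r + w) (s + w)); [lra |].
    replace (s + w - (r + w)) with (s - r) by ring. field. lra.
  - replace (- ((r + r) / 2)) with (- r) by field.
    apply convex_on_ext with (2 := convex_diag r ltac:(lra)). intro w.
    unfold divdiff. destruct (Req_EM_T (r + w) (r + w)); [reflexivity | lra].
  - replace (s + r) with (r + s) by ring.
    apply convex_on_ext with (2 := convex_offdiag s r Hsr). intro w.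
    rewrite divdiff_sym. unfold divdiff. destruct (Req_EM_T (s + w) (r + w)); [lra |].
    replace (r + w - (s + w)) with (r - s) by ring. field. lra.
Qed.

Hypothesis k_even : forall u, k (- u) = k u.
Hypothesis k1_odd : forall u, k1 (- u) = - k1 u.

(* For even k the reflection w |-> -w, (r,s) |-> (-r,-s) leaves
   w [r+w, s+w]k unchanged, which gives the case s + r < 0. *)
Theorem divdiff_weighted_convex_neg (r s : R) :
  s + r < 0 ->
  convex_on (fun w => w * divdiff k k1 (r + w) (s + w)) 0 (- ((s + r) / 2)).
Proof.
  intro Hsum.
  pose proof (convex_on_reflect _ _ _ (divdiff_weighted_convex (- r) (- s) ltac:(lra))) as H.
  replace (- 0) with 0 in H by ring.
  replace (- - ((- s + - r) / 2)) with (- ((s + r) / 2)) in H by field.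
  apply convex_on_ext with (2 := H). intro w.
  replace (- r + - w) with (- (r + w)) by ring. replace (- s + - w) with (- (s + w)) by ring.
  rewrite divdiff_opp by assumption. ring.
Qed.

End DivdiffConvexity.

Definition K_sc (c u : R) : R := K (c * u).
Definition K1_sc (c u : R) : R := c * K1 (c * u).
Definition K2_sc (c u : R) : R := c * c * K2 (c * u).

Lemma scaled_kernel_convex (c : R) (r s : R) :
  c <> 0 ->
  (0 < s + r ->
   convex_on (fun w => w * divdiff (K_sc c) (K1_sc c) (r + w) (s + w)) (- ((s + r) / 2)) 0) /\
  (s + r < 0 ->
   convex_on (fun w => w * divdiff (K_sc c) (K1_sc c) (r + w) (s + w)) 0 (- ((s + r) / 2))).
Proof.
  intro Hc.
  assert (k_deriv : forall u, derivable_pt_lim (K_sc c) u (K1_sc c u)).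
  { intro u. apply (derivable_pt_lim_scale K). apply K_deriv. }
  assert (k1_deriv : forall u, u <> 0 -> derivable_pt_lim (K1_sc c) u (K2_sc c u)).
  { intros u Hu. unfold K2_sc. rewrite Rmult_assoc.
    apply (derivable_pt_lim_scal (fun u => K1 (c * u))).
    apply (derivable_pt_lim_scale K1). apply K1_deriv.
    now apply Rmult_integral_contrapositive_currified. }
  assert (k1_cont_0 : continuity_pt (K1_sc c) 0).
  { apply (continuity_pt_scal (fun u => K1 (c * u))). apply continuity_pt_scale.
    rewrite Rmult_0_r. exact K1_cont_0. }
  assert (k2_nonneg : forall u, u <> 0 -> 0 <= K2_sc c u).
  { intros u Hu. apply Rmult_le_pos; [nra |]. apply K2_nonneg.
    now apply Rmult_integral_contrapositive_currified. }
  assert (k2_antitone_abs :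
            forall p q, p <> 0 -> p * p <= q * q -> K2_sc c q <= K2_sc c p).
  { intros p q Hp Hpq. apply Rmult_le_compat_l; [nra |]. apply K2_antitone_abs.
    - now apply Rmult_integral_contrapositive_currified.
    - nra. }
  assert (k_even : forall u, K_sc c (- u) = K_sc c u).
  { intro u. unfold K_sc. rewrite <- K_opp. f_equal. ring. }
  assert (k1_odd : forall u, K1_sc c (- u) = - K1_sc c u).
  { intro u. unfold K1_sc. replace (c * - u) with (- (c * u)) by ring. rewrite K1_opp. ring. }
  split; intro Hsum.
  - now apply (divdiff_weighted_convex _ _ (K2_sc c)).
  - now apply (divdiff_weighted_convex_neg _ _ (K2_sc c)).
Qed.

Lemma ln_div_pos (a b : R) : 0 < a -> 0 < b -> ln (a / b) = ln a - ln b.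
Proof.
  intros Ha Hb. unfold Rdiv.
  rewrite ln_mult, ln_Rinv by (try apply Rinv_0_lt_compat; assumption). ring.
Qed.

Lemma ln_sqrt_pos (a : R) : 0 < a -> ln (sqrt a) = ln a / 2.
Proof.
  intro Ha. pose proof (sqrt_lt_R0 a Ha) as Hs.
  rewrite <- (sqrt_sqrt a) at 2 by lra. rewrite ln_mult by exact Hs. field.
Qed.

Section LogMean.

Variables x y : R.
Hypothesis hx : 0 < x.
Hypothesis hy : 0 < y.
Hypothesis hxy : x <> y.

Let m := (ln x + ln y) / 2.
Let c := (ln y - ln x) / 2.

Lemma half_log_gap_neq_0 : c <> 0.
Proof. unfold c. intro H. apply hxy, ln_inv; [exact hx | exact hy | lra]. Qed.

Lemma power_diff_factor (t : R) :
  Rpower y t - Rpower x t = 2 * c * t * exp (m * t) * sinhc (c * t).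
Proof.
  pose proof half_log_gap_neq_0 as Hc. unfold sinhc.
  destruct (Req_EM_T (c * t) 0) as [Hct | Hct].
  - destruct (Rmult_integral _ _ Hct) as [| ->]; [contradiction |].
    rewrite !Rpower_O by assumption. ring.
  - unfold Rpower, sinh.
    replace (t * ln y) with (m * t + c * t) by (unfold m, c; field).
    replace (t * ln x) with (m * t + - (c * t)) by (unfold m, c; field).
    rewrite !exp_plus. field.
    split; [intro Ht; apply Hct; rewrite Ht; ring | exact Hc].
Qed.

Lemma exp_sinhc_pos (t : R) : 0 < exp (m * t) * sinhc (c * t).
Proof.
  apply Rmult_lt_0_compat; [apply exp_pos |].
  pose proof (sinhc_bounds (c * t)). lra.
Qed.

Lemma ln_E_offdiag (p q : R) :
  p <> q -> ln (E p q x y) = (m * q + K (c * q) - (m * p + K (c * p))) / (q - p).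
Proof.
  intro Hpq. pose proof half_log_gap_neq_0 as Hc.
  assert (Hgap : ln y - ln x = 2 * c) by (unfold c; field).
  assert (Hlog : forall t, ln (exp (m * t) * sinhc (c * t)) = m * t + K (c * t)).
  { intro t. rewrite ln_mult, ln_exp; [reflexivity | apply exp_pos |].
    pose proof (sinhc_bounds (c * t)). lra. }
  unfold E. destruct (Req_EM_T x y) as [| _]; [contradiction |].
  destruct (Req_EM_T p 0) as [-> | Hp]; [| destruct (Req_EM_T q 0) as [-> | Hq]].
  - destruct (Req_EM_T q 0) as [| Hq]; [lra |].
    rewrite power_diff_factor, Hgap.
    replace (1 / q * (2 * c * q * exp (m * q) * sinhc (c * q)) / (2 * c))
      with (exp (m * q) * sinhc (c * q)) by (field; auto).
    rewrite ln_Rpower, Hlog, !Rmult_0_r, K_0. field. exact Hq.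
  - rewrite power_diff_factor, Hgap.
    replace (1 / p * (2 * c * p * exp (m * p) * sinhc (c * p)) / (2 * c))
      with (exp (m * p) * sinhc (c * p)) by (field; auto).
    rewrite ln_Rpower, Hlog, !Rmult_0_r, K_0. field. exact Hp.
  - destruct (Req_EM_T p q) as [| _]; [contradiction |].
    rewrite !power_diff_factor.
    pose proof (exp_sinhc_pos p). pose proof (exp_sinhc_pos q).
    pose proof (exp_pos (m * p)). pose proof (sinhc_bounds (c * p)).
    replace (p / q * (2 * c * q * exp (m * q) * sinhc (c * q))
             / (2 * c * p * exp (m * p) * sinhc (c * p)))
      with (exp (m * q) * sinhc (c * q) / (exp (m * p) * sinhc (c * p)))
      by (field; repeat split; lra).
    rewrite ln_Rpower, ln_div_pos, !Hlog by assumption. field. lra.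
Qed.

Lemma ln_E_diag (p : R) : ln (E p p x y) = m + c * K1 (c * p).
Proof.
  pose proof half_log_gap_neq_0 as Hc.
  unfold E. destruct (Req_EM_T x y) as [| _]; [contradiction |].
  unfold K1. destruct (Req_EM_T p 0) as [-> | Hp].
  - destruct (Req_EM_T (c * 0) 0) as [_ | H0]; [| lra].
    rewrite ln_sqrt_pos, ln_mult by nra. unfold m. ring.
  - destruct (Req_EM_T (c * p) 0) as [H0 | Hcp].
    { destruct (Rmult_integral _ _ H0); contradiction. }
    destruct (Req_EM_T p p) as [_ | ]; [| lra].
    rewrite ln_mult by (unfold Rpower; apply exp_pos).
    rewrite ln_exp, !ln_Rpower, ln_div_pos by (unfold Rpower; apply exp_pos).
    rewrite !ln_Rpower. unfold Rpower.
    replace (ln x) with (m - c) by (unfold m, c; field).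
    replace (ln y) with (m + c) by (unfold m, c; field).
    replace (p * (m - c)) with (m * p + - (c * p)) by ring.
    replace (p * (m + c)) with (m * p + c * p) by ring.
    rewrite !exp_plus.
    assert (Hsinh : exp (c * p) - exp (- (c * p)) <> 0).
    { pose proof (sinh_neq_0 (c * p) Hcp). unfold sinh in *. lra. }
    pose proof (exp_pos (m * p)).
    unfold cosh, sinh. field. repeat split; auto.
    replace (exp (m * p) * exp (- (c * p)) - exp (m * p) * exp (c * p))
      with (- (exp (m * p) * (exp (c * p) - exp (- (c * p))))) by ring.
    apply Ropp_neq_0_compat, Rmult_integral_contrapositive_currified; lra.
Qed.

Lemma ln_E (p q : R) : ln (E p q x y) = m + divdiff (K_sc c) (K1_sc c) p q.
Proof.
  unfold divdiff, K_sc, K1_sc. destruct (Req_EM_T p q) as [<- | Hpq].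
  - apply ln_E_diag.
  - rewrite ln_E_offdiag by exact Hpq. field. lra.
Qed.

End LogMean.

Theorem theorem5 (x y r s : R) (hx : 0 < x) (hy : 0 < y) :
  (s + r > 0 -> convex_on (fun w => w * ln (F r s x y w)) (- ((s + r) / 2)) 0) /\
  (s + r < 0 -> convex_on (fun w => w * ln (F r s x y w)) 0 (- ((s + r) / 2))).
Proof.
  destruct (Req_dec x y) as [<- | hxy].
  - (* E(p,q;x,x) = x, so w ln F(w) = w ln x is linear. *)
    assert (Hlin : forall a b, convex_on (fun w => w * ln (F r s x x w)) a b).
    { intros a b u v t _ _ _. unfold F, E.
      destruct (Req_EM_T x x) as [_ | ]; [right; ring | lra]. }
    split; intros _; apply Hlin.
  - set (m := (ln x + ln y) / 2). set (c := (ln y - ln x) / 2).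
    set (g := fun w => w * divdiff (K_sc c) (K1_sc c) (r + w) (s + w)).
    assert (Hrepr : forall w, m * w + g w = w * ln (F r s x y w)).
    { intro w. unfold F, g. rewrite (ln_E x y hx hy hxy). fold m c. ring. }
    destruct (scaled_kernel_convex c r s (half_log_gap_neq_0 x y hx hy hxy)) as [Cpos Cneg].
    split; intro Hsum; apply (convex_on_ext (fun w => m * w + g w) _ _ _ Hrepr);
      apply convex_on_add_linear; [apply Cpos | apply Cneg]; lra.
Qed.
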